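(* The diagonals and columns of $F$ are periodic: for every integer $a\ge 0$ and every integer $n>a$, $F_{n+2a+1,\,n+a+1}=F_{n,n-a}$ (the $a$-th subdiagonal $(F_{n,n-a})_{n>a}$ has period $2a+1$); and for every integer $a\ge 1$ and every integer $n\ge a$, $F_{n+a,a}=F_{n,a}$ (the $a$-th column $(F_{n,a})_{n\ge a}$ has period $a$).
   Context: Define maps $G,S:\mathbb Z^2\to\mathbb Z^2$ by $G(x,y)=(x+y,y)$ and $S(x,y)=(3x-2y+1,\,2x-y+1)$. Define the array $(F_{n,k})_{n,k\ge 0}$ by $F_{0,0}=1$ and, for $(n,k)\neq(0,0)$, $F_{n,k}$ is the number of finite words $w=w_1w_2\cdots w_m$ ($m\ge 0$) over the alphabet $\{G,S\}$ with $w_1\circ w_2\circ\cdots\circ w_m(1,1)=(n,k)$ (the empty word acts as the identity). Equivalently: start with all entries $0$, set $F_{0,0}=1$ and $F_{1,1}=1$, and thereafter, whenever an entry $F_{n,k}$ with $n\ge 1$ changes its value, increase $F_{n+k,k}$ and $F_{3n+1-2k,\,2n+1-k}$ by $1$. *)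

From mathcomp Require Import all_boot all_order all_algebra zify.
Set Implicit Arguments. Unset Strict Implicit. Unset Printing Implicit Defensive.
Import Order.TTheory GRing.Theory Num.Theory.
Local Open Scope ring_scope.

Definition Gmap (p : int * int) : int * int := (p.1 + p.2, p.2).
Definition Smap (p : int * int) : int * int :=
  (3 * p.1 - 2 * p.2 + 1, 2 * p.1 - p.2 + 1).

(* A word over {G,S} is a seq bool: true = G, false = S.
   w_1 w_2 ... w_m acts as w_1 o w_2 o ... o w_m, applied to (1,1). *)
Definition letter (b : bool) : int * int -> int * int :=
  if b then Gmap else Smap.
Definition eval_word (w : seq bool) : int * int :=
  foldr (fun b p => letter b p) (1, 1) w.

Definition nwords (m : nat) (n k : int) : nat :=
  #|[set t : m.-tuple bool | eval_word t == (n, k)]|.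

(* Words of length m >= n + 1 never reach a point with
   first coordinate n (lemma [eval_word_size] below), so summing over
   lengths m <= n counts all words. *)
Definition F (n k : nat) : nat :=
  if (n == 0%N) && (k == 0%N) then 1%N
  else (\sum_(m < n.+1) nwords m n%:Z k%:Z)%N.

Lemma eval_word_inv (w : seq bool) :
  let p := eval_word w in
  [/\ (size w)%:Z + 1 <= p.1, 1 <= p.2 & p.2 <= p.1].
Proof.
elim: w => [|b w IH] /=; first by [].
case: IH; rewrite /letter; set p := eval_word w => H1 H2 H3.
case: b; rewrite /Gmap /Smap /=; split; lia.
Qed.

Lemma eval_word_size (w : seq bool) (n k : int) :
  eval_word w = (n, k) -> (size w)%:Z + 1 <= n.
Proof. by have [H _ _] := eval_word_inv w => E; rewrite E in H. Qed.

Lemma nwords_big (m n k : nat) : (n <= m)%N -> nwords m n%:Z k%:Z = 0%N.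
Proof.
move=> Hnm; apply/eqP; rewrite cards_eq0; apply/eqP/setP => t.
rewrite !inE; apply/negbTE/eqP => /eval_word_size.
rewrite size_tuple; lia.
Qed.

From mathcomp Require Import all_boot all_algebra zify.

(* A nonempty word reaching p is G w or S w with w one letter shorter reaching
   the G- or S-preimage of p, and every word lands in the region 1 <= k <= n.
   For p = (x, y) with y <= x, the G-preimage (x - y, 2x - y + 1) of S p and the
   S-preimage (y - x - 1, y - 2x - 1) of G p lie outside that region, so
   F (S p) = F p and F (G p) = F p.  The a-th subdiagonal consists of the
   S-images of the points (n, n - a), the a-th column of the G-images of (n, a). *)

Lemma card_tupleS_bool m (P : pred (seq bool)) :
  #|[set t : m.+1.-tuple bool | P t]| =
  (#|[set t : m.-tuple bool | P (true :: t)]|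
   + #|[set t : m.-tuple bool | P (false :: t)]|)%N.
Proof.
rewrite -!sum1dep_card.
rewrite (reindex (fun p : bool * m.-tuple bool => cons_tuple p.1 p.2)) /=.
  rewrite -(pair_big_dep xpredT (fun b (t : m.-tuple bool) => P (b :: t))
                         (fun _ _ => 1%N)) /=.
  by rewrite big_bool.
exists (fun t : m.+1.-tuple bool => (thead t, behead_tuple t)) => [[b t] _|t _] /=.
  by congr pair; apply: val_inj.
by case/tupleP: t => b t; apply: val_inj.
Qed.

Local Open Scope ring_scope.

Lemma nwords0 (n k : int) : nwords 0 n k = ((n == 1) && (k == 1)) :> nat.
Proof.
rewrite /nwords; set b := (_ && _).
have -> : [set t : 0.-tuple bool | eval_word t == (n, k)] = if b then setT else set0.
  apply/setP => t; rewrite inE tuple0 /= xpair_eqE.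
  by rewrite ![1 == _]eq_sym -/b; case: b; rewrite !inE.
by case: b; rewrite ?cardsT ?cards0 // card_tuple.
Qed.

Lemma nwords_eq0 m (n k : int) :
  ~ ((m%:Z + 1 <= n) /\ (1 <= k) /\ (k <= n)) -> nwords m n k = 0%N.
Proof.
move=> outside; apply/eqP; rewrite cards_eq0; apply/eqP/setP => t.
rewrite !inE; apply/negbTE/eqP => Et.
have [] := eval_word_inv t; rewrite Et /= size_tuple => *; apply: outside; lia.
Qed.

(* (n - k, k) and (2k - n - 1, 3k - 2n - 1) are the preimages of (n, k) under G and S. *)
Lemma nwordsS m (n k : int) :
  nwords m.+1 n k =
  (nwords m (n - k) k + nwords m (2 * k - n - 1) (3 * k - 2 * n - 1))%N.
Proof.
rewrite /nwords (card_tupleS_bool _ (fun s => eval_word s == (n, k))).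
congr addn; apply: eq_card => t; rewrite !inE /=;
  case: (eval_word t) => x y; rewrite /letter /Gmap /Smap /= !xpair_eqE;
  apply/idP/idP => /andP [/eqP H1 /eqP H2]; apply/andP; split; apply/eqP; lia.
Qed.

Lemma F_sum_nwords (n k M : nat) : (0 < n)%N -> (n <= M)%N ->
  F n k = (\sum_(m < M) nwords m n k)%N.
Proof.
move=> n_gt0 le_nM; rewrite /F -[n == 0%N]negbK -lt0n n_gt0 /=.
have drop_long M' : (n <= M')%N ->
    (\sum_(m < M') nwords m n k = \sum_(m < n) nwords m n k)%N.
  move=> le_nM'; rewrite -(subnKC le_nM') big_split_ord /=.
  rewrite [X in (_ + X)%N]big1 ?addn0 // => i _.
  apply: nwords_eq0; lia.
by rewrite !drop_long.
Qed.

Lemma F_nwordsS (n k : nat) : (1 < n)%N ->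
  F n k = (\sum_(m < n) (nwords m (n%:Z - k%:Z) k
                         + nwords m (2 * k%:Z - n%:Z - 1) (3 * k%:Z - 2 * n%:Z - 1)))%N.
Proof.
move=> n_gt1; rewrite (@F_sum_nwords _ _ n.+1) 1?ltnW // big_ord_recl nwords0.
have -> : n%:Z == 1 = false by apply/eqP; lia.
by apply: eq_bigr => m _; rewrite nwordsS.
Qed.

Lemma F_Gmap (x y : nat) : (y <= x)%N -> F (x + y) y = F x y.
Proof.
move=> le_yx; have [->|y_gt0] := posnP y; first by rewrite addn0.
rewrite F_nwordsS; last lia.
rewrite (@F_sum_nwords x y (x + y)); [|lia|lia].
apply: eq_bigr => m _; rewrite [X in (_ + X)%N]nwords_eq0 ?addn0; last lia.
congr nwords; lia.
Qed.

Lemma F_Smap (x y : nat) : (y <= x)%N ->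
  F (3 * x - 2 * y + 1) (2 * x - y + 1) = F x y.
Proof.
move=> le_yx; have [x0|x_gt0] := posnP x.
  move: le_yx; rewrite x0 leqn0 => /eqP-> /=.
  by rewrite (@F_sum_nwords _ _ 1) // big_ord1 nwords0.
rewrite F_nwordsS; last lia.
rewrite (@F_sum_nwords x y (3 * x - 2 * y + 1)); [|lia|lia].
apply: eq_bigr => m _; rewrite [X in (X + _)%N]nwords_eq0 ?add0n; last lia.
congr nwords; lia.
Qed.

Theorem theorem13 :
  (forall a n : nat, (a < n)%N ->
     F (n + 2 * a + 1) (n + a + 1) = F n (n - a)) /\
  (forall a n : nat, (1 <= a)%N -> (a <= n)%N ->
     F (n + a) a = F n a).
Proof.
split=> [a n lt_an | a n _ le_an].
- by rewrite -(@F_Smap n (n - a) (leq_subr a n)); congr F; lia.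
- exact: F_Gmap.
Qed.
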